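(* Let $0<\rho\le\infty$ and let $f(z)=\sum_{k\ge0}c_kz^k$ be a power series with real coefficients convergent on $D(0,\rho)$. Fix an integer $N\ge1$. If $f[A]$ is positive semidefinite for every $A\in\mathbb{P}^1_N((0,\rho))$, then the first $N$ non-zero Taylor coefficients $c_j$ of $f$ (or all of the non-zero ones, if there are fewer than $N$) are strictly positive.
   Context: $\mathbb{P}^1_N(I)$ is the set of $N\times N$ positive semidefinite matrices of rank at most one with all entries in $I$. $D(0,\rho)$ is the open disc of radius $\rho$ about $0$. For a matrix $A=(a_{jk})$, $f[A]:=(f(a_{jk}))$. *)

From Stdlib Require Import Reals Lra Lia Classical ClassicalEpsilon.
Open Scope R_scope.

(* Extended radius: [None] stands for rho = +infinity. *)
Definition erad := option R.

Definition erad_pos (rho : erad) : Prop :=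
  match rho with None => True | Some r => 0 < r end.

Definition in_disc (rho : erad) (x : R) : Prop :=
  match rho with None => True | Some r => Rabs x < r end.

Definition in_open_interval (rho : erad) (x : R) : Prop :=
  0 < x /\ in_disc rho x.

Definition pser_converges (c : nat -> R) (x : R) : Prop :=
  exists l, Pser c x l.

(* Its sum (meaningful when it converges). *)
Definition pser_val (c : nat -> R) (x : R) : R :=
  epsilon (inhabits 0) (fun l => Pser c x l).

Fixpoint fsum (n : nat) (f : nat -> R) : R :=
  match n with
  | O => 0
  | S m => fsum m f + f m
  end.

(* Real N x N matrices are functions nat -> nat -> R, read on indices < N. *)
Definition psd (N : nat) (A : nat -> nat -> R) : Prop :=
  (forall i j, (i < N)%nat -> (j < N)%nat -> A i j = A j i) /\
  (forall v : nat -> R,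
      0 <= fsum N (fun i => fsum N (fun j => v i * A i j * v j))).

Definition rank_le1 (N : nat) (A : nat -> nat -> R) : Prop :=
  exists u w : nat -> R,
    forall i j, (i < N)%nat -> (j < N)%nat -> A i j = u i * w j.

Definition P1N (N : nat) (rho : erad) (A : nat -> nat -> R) : Prop :=
  psd N A /\ rank_le1 N A /\
  (forall i j, (i < N)%nat -> (j < N)%nat -> in_open_interval rho (A i j)).

Definition entrywise (f : R -> R) (A : nat -> nat -> R) : nat -> nat -> R :=
  fun i j => f (A i j).

Fixpoint count_nz (c : nat -> R) (k : nat) : nat :=
  match k with
  | O => O
  | S m => (count_nz c m + (if Req_EM_T (c m) 0 then 0 else 1))%nat
  end.

From Stdlib Require Import Reals Lra Lia List ClassicalEpsilon.
From Coquelicot Require Import Coquelicot.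
Open Scope R_scope.

(* Suppose c_k < 0 although fewer than N coefficients below k are nonzero. The
   polynomial P(y) = prod_(j < k, c_j <> 0) (y - 2^-j) has degree < N, so its
   coefficients form a test vector v in R^N. For the rank-one matrix
   A = (t 2^-i 2^-j)_(i,j) the quadratic form of f[A] at v expands to
     sum_n c_n t^n P(2^-n)^2,
   a power series in t whose terms of degree < k vanish (c_n = 0 or P(2^-n) = 0)
   and whose degree-k coefficient c_k P(2^-k)^2 is negative. Hence it is negative
   for small t > 0, contradicting the positive semidefiniteness of f[A]. *)

Lemma fsum_ext (n : nat) (f g : nat -> R) :
  (forall i, (i < n)%nat -> f i = g i) -> fsum n f = fsum n g.
Proof.
  induction n as [|n IH]; intros H; simpl; [reflexivity|].
  rewrite IH by (intros; apply H; lia). rewrite H by lia; reflexivity.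
Qed.

Lemma fsum_plus (n : nat) (f g : nat -> R) :
  fsum n (fun i => f i + g i) = fsum n f + fsum n g.
Proof. induction n as [|n IH]; simpl; [lra|]. rewrite IH; ring. Qed.

Lemma fsum_scal (n : nat) (a : R) (f : nat -> R) :
  fsum n (fun i => a * f i) = a * fsum n f.
Proof. induction n as [|n IH]; simpl; [lra|]. rewrite IH; ring. Qed.

Lemma fsum_rank_one_form (n : nat) (t : R) (u v : nat -> R) :
  fsum n (fun i => fsum n (fun j => v i * (t * u i * u j) * v j))
  = t * fsum n (fun i => v i * u i) ^ 2.
Proof.
  set (s := fsum n (fun j => v j * u j)).
  transitivity (fsum n (fun i => (t * s) * (v i * u i))).
  - apply fsum_ext; intros i _.
    transitivity (fsum n (fun j => (t * (v i * u i)) * (v j * u j))).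
    + apply fsum_ext; intros; ring.
    + rewrite fsum_scal. fold s. ring.
  - rewrite fsum_scal. fold s. ring.
Qed.

Definition shift_coefs (w : nat -> R) (l : nat) : R :=
  match l with O => 0 | S l' => w l' end.

Fixpoint root_coefs (rs : list R) : nat -> R :=
  match rs with
  | nil => fun l => match l with O => 1 | S _ => 0 end
  | r :: rs' => fun l => shift_coefs (root_coefs rs') l - r * root_coefs rs' l
  end.

Definition root_prod (rs : list R) (y : R) : R :=
  fold_right (fun r p => (y - r) * p) 1 rs.

Lemma root_coefs_high (rs : list R) (l : nat) :
  (length rs < l)%nat -> root_coefs rs l = 0.
Proof.
  revert l; induction rs as [|r rs IH]; intros l Hl; simpl in *.
  - destruct l; [lia|reflexivity].
  - destruct l as [|l]; [lia|]. simpl. rewrite !IH by lia. ring.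
Qed.

Lemma fsum_shift_coefs (w : nat -> R) (M : nat) (y : R) :
  fsum (S M) (fun l => shift_coefs w l * y ^ l) = y * fsum M (fun l => w l * y ^ l).
Proof.
  induction M as [|M IH]; simpl in *; [ring|]. rewrite IH; ring.
Qed.

Lemma fsum_root_coefs (rs : list R) (M : nat) (y : R) :
  (length rs < M)%nat -> fsum M (fun l => root_coefs rs l * y ^ l) = root_prod rs y.
Proof.
  revert M; induction rs as [|r rs IH]; intros M HM; simpl in *.
  - induction M as [|M IHM]; [lia|].
    destruct M as [|M]; [simpl; ring|].
    transitivity (fsum (S M) (fun l => root_coefs nil l * y ^ l) + 0 * y ^ S M);
      [reflexivity|].
    cbn [root_coefs]. rewrite IHM by lia. simpl; ring.
  - destruct M as [|M]; [lia|].
    rewrite (fsum_ext _ _ (fun l => shift_coefs (root_coefs rs) l * y ^ l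
                                   + (- r) * (root_coefs rs l * y ^ l))) by (intros; ring).
    rewrite fsum_plus, fsum_scal, fsum_shift_coefs. simpl fsum at 2.
    rewrite (root_coefs_high rs M), !IH by lia. ring.
Qed.

Lemma root_prod_root (rs : list R) (y : R) : In y rs -> root_prod rs y = 0.
Proof.
  induction rs as [|r rs IH]; simpl; [tauto|].
  intros [->|Hy]; [ring|]. rewrite IH by exact Hy. ring.
Qed.

Lemma root_prod_neq0 (rs : list R) (y : R) : ~ In y rs -> root_prod rs y <> 0.
Proof.
  induction rs as [|r rs IH]; simpl; intros Hy; [lra|].
  apply Rmult_integral_contrapositive; split.
  - intros E. apply Hy. left. lra.
  - apply IH. tauto.
Qed.

Lemma root_prod_bound (rs : list R) (y : R) :
  (forall r, In r rs -> 0 <= r <= 1) -> 0 <= y <= 1 -> Rabs (root_prod rs y) <= 1.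
Proof.
  intros Hrs Hy. induction rs as [|r rs IH]; simpl.
  - rewrite Rabs_R1; lra.
  - rewrite Rabs_mult.
    assert (Hr : Rabs (y - r) <= 1) by (specialize (Hrs r (or_introl eq_refl)); apply Rabs_le; lra).
    assert (Hp : Rabs (root_prod rs y) <= 1) by (apply IH; intros; apply Hrs; right; assumption).
    pose proof (Rabs_pos (y - r)). pose proof (Rabs_pos (root_prod rs y)). nra.
Qed.

Fixpoint nz_exponents (c : nat -> R) (k : nat) : list nat :=
  match k with
  | O => nil
  | S m => if Req_EM_T (c m) 0 then nz_exponents c m else m :: nz_exponents c m
  end.

Lemma length_nz_exponents (c : nat -> R) (k : nat) :
  length (nz_exponents c k) = count_nz c k.
Proof.
  induction k as [|k IH]; simpl; [reflexivity|].
  destruct (Req_EM_T (c k) 0); simpl; rewrite IH; lia.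
Qed.

Lemma In_nz_exponents (c : nat -> R) (k j : nat) :
  In j (nz_exponents c k) <-> (j < k)%nat /\ c j <> 0.
Proof.
  induction k as [|k IH]; simpl; [split; [tauto|lia]|].
  destruct (Req_EM_T (c k) 0) as [Hk|Hk]; simpl; rewrite IH; split.
  - intros [Hj Hc]; split; [lia|exact Hc].
  - intros [Hj Hc]. split; [|exact Hc].
    destruct (Nat.eq_dec j k) as [->|]; [contradiction|lia].
  - intros [->|[Hj Hc]]; split; (lia || assumption).
  - intros [Hj Hc]. destruct (Nat.eq_dec j k) as [->|]; [left; reflexivity|].
    right; split; [lia|exact Hc].
Qed.

Lemma pow_in_unit (x : R) (n : nat) : 0 < x <= 1 -> 0 < x ^ n <= 1.
Proof. intros Hx; induction n as [|n IH]; simpl; nra. Qed.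

Lemma pow_lt_contravar (x : R) (j k : nat) : 0 < x < 1 -> (j < k)%nat -> x ^ k < x ^ j.
Proof.
  intros Hx Hjk. replace k with (j + (k - j))%nat by lia. rewrite pow_add.
  pose proof (pow_lt x j (proj1 Hx)).
  pose proof (pow_lt_1_compat x (k - j) ltac:(lra) ltac:(lia)). nra.
Qed.

Definition nz_roots (c : nat -> R) (x : R) (k : nat) : list R :=
  map (pow x) (nz_exponents c k).

Lemma length_nz_roots (c : nat -> R) (x : R) (k : nat) :
  length (nz_roots c x k) = count_nz c k.
Proof. unfold nz_roots. rewrite length_map. apply length_nz_exponents. Qed.

Lemma root_prod_nz_roots_bound (c : nat -> R) (x : R) (k n : nat) :
  0 < x <= 1 -> Rabs (root_prod (nz_roots c x k) (x ^ n)) <= 1.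
Proof.
  intros Hx. apply root_prod_bound.
  - intros y Hy. apply in_map_iff in Hy as [j [<- _]].
    pose proof (pow_in_unit x j Hx). lra.
  - pose proof (pow_in_unit x n Hx). lra.
Qed.

Lemma root_prod_nz_roots_low (c : nat -> R) (x : R) (k n : nat) :
  (n < k)%nat -> c n <> 0 -> root_prod (nz_roots c x k) (x ^ n) = 0.
Proof. intros Hn Hc. apply root_prod_root, in_map, In_nz_exponents; split; assumption. Qed.

Lemma root_prod_nz_roots_top (c : nat -> R) (x : R) (k : nat) :
  0 < x < 1 -> root_prod (nz_roots c x k) (x ^ k) <> 0.
Proof.
  intros Hx. apply root_prod_neq0. intros Hin.
  apply in_map_iff in Hin as [j [Hj Hin]]. apply In_nz_exponents in Hin as [Hjk _].
  pose proof (pow_lt_contravar x j k Hx Hjk). lra.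
Qed.

Lemma infinite_sum_fsum (N : nat) (g : nat -> nat -> R) (l : nat -> R) :
  (forall i, (i < N)%nat -> infinite_sum (g i) (l i)) ->
  infinite_sum (fun n => fsum N (fun i => g i n)) (fsum N l).
Proof.
  induction N as [|N IH]; intros H; simpl.
  - intros e He. exists O. intros n _. rewrite sum_eq_R0 by reflexivity.
    rewrite R_dist_eq. exact He.
  - apply is_series_Reals.
    apply (is_series_plus (fun n => fsum N (fun i => g i n)) (g N));
      apply is_series_Reals; [apply IH; intros i Hi|]; apply H; lia.
Qed.

Lemma infinite_sum_scal (s : nat -> R) (l a b : R) :
  infinite_sum s l -> infinite_sum (fun n => a * s n * b) (a * l * b).
Proof.
  intros H. apply is_series_Reals.
  replace (a * l * b) with (l * b * a) by ring.
  apply (is_series_ext (fun n => (s n * b) * a)); [intros n; cbn; ring|].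
  apply is_series_scal_r, is_series_scal_r, is_series_Reals, H.
Qed.

Lemma Pser_rank_one_form (c : nat -> R) (f : R -> R) (N : nat) (t : R) (u v : nat -> R) :
  (forall i j, (i < N)%nat -> (j < N)%nat -> Pser c (t * u i * u j) (f (t * u i * u j))) ->
  Pser (fun n => c n * fsum N (fun i => v i * u i ^ n) ^ 2) t
       (fsum N (fun i => fsum N (fun j => v i * f (t * u i * u j) * v j))).
Proof.
  intros Hf. apply is_series_Reals.
  apply (is_series_ext
    (fun n => fsum N (fun i => fsum N (fun j => v i * (c n * (t * u i * u j) ^ n) * v j)))).
  - intros n; cbn.
    transitivity (fsum N (fun i => fsum N (fun j => v i * (c n * t ^ n * u i ^ n * u j ^ n) * v j))).
    + apply fsum_ext; intros i _; apply fsum_ext; intros j _.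
      rewrite !Rpow_mult_distr; ring.
    + rewrite fsum_rank_one_form; ring.
  - apply is_series_Reals.
    apply infinite_sum_fsum; intros i Hi. apply infinite_sum_fsum; intros j Hj.
    apply infinite_sum_scal, Hf; assumption.
Qed.

Lemma pser_val_spec (c : nat -> R) (y : R) : pser_converges c y -> Pser c y (pser_val c y).
Proof. intros [l Hl]. unfold pser_val. apply epsilon_spec. exists l; exact Hl. Qed.

Lemma CV_radius_weighted (c w : nat -> R) (r l : R) :
  Pser c r l -> (forall n, Rabs (w n) <= 1) -> Rbar_le r (CV_radius (fun n => c n * w n)).
Proof.
  intros Hc Hw.
  destruct (filterlim_bounded (fun n => c n * r ^ n)) as [M HM].
  { exists 0. apply ex_series_lim_0. exists l. apply is_series_Reals, Hc. }
  apply (proj1 (CV_radius_bounded _)). exists M. intros n.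
  replace (c n * w n * r ^ n) with ((c n * r ^ n) * w n) by ring.
  rewrite Rabs_mult. specialize (HM n). specialize (Hw n).
  pose proof (Rabs_pos (c n * r ^ n)). change (Rabs (c n * r ^ n) <= M) in HM. nra.
Qed.

Lemma CV_radius_decr_n (a : nat -> R) (k : nat) : CV_radius (PS_decr_n a k) = CV_radius a.
Proof.
  induction k as [|k IH]; [apply CV_radius_ext; reflexivity|].
  rewrite <- IH, <- (CV_radius_decr_1 (PS_decr_n a k)).
  apply CV_radius_ext; intros n. unfold PS_decr_n, PS_decr_1. f_equal; lia.
Qed.

Lemma PSeries_neg_near_0 (a : nat -> R) (k : nat) :
  Rbar_lt 0 (CV_radius a) -> (forall n, (n < k)%nat -> a n = 0) -> a k < 0 ->
  forall r, 0 < r -> exists t, 0 < t <= r /\ PSeries a t < 0.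
Proof.
  intros Hr Hlow Hak r Hr0.
  (* PSeries a t = t^k g(t) with g continuous at 0 and g(0) = a k. *)
  assert (Hcont : continuity_pt (PSeries (PS_decr_n a k)) 0).
  { apply PSeries_continuity. rewrite Rabs_R0, CV_radius_decr_n. exact Hr. }
  assert (Hat0 : PSeries (PS_decr_n a k) 0 = a k).
  { rewrite PSeries_0. unfold PS_decr_n. f_equal; lia. }
  destruct (Hcont (- a k) ltac:(lra)) as [d [Hd Hnear]].
  set (t := Rmin r (d / 2)).
  assert (Ht : 0 < t <= r /\ t < d).
  { unfold t. split; [split; [apply Rmin_glb_lt|apply Rmin_l]|]; try lra.
    eapply Rle_lt_trans; [apply Rmin_r|lra]. }
  exists t. split; [apply Ht|].
  rewrite (PSeries_decr_n_aux a k t Hlow).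
  assert (Hdecr : PSeries (PS_decr_n a k) t < 0).
  { assert (Hdist : R_dist (PSeries (PS_decr_n a k) t) (PSeries (PS_decr_n a k) 0) < - a k).
    { apply Hnear. split; [split; [exact I|lra]|].
      simpl. unfold R_dist. rewrite Rminus_0_r, Rabs_right; lra. }
    unfold R_dist in Hdist. rewrite Hat0 in Hdist. apply Rabs_def2 in Hdist. lra. }
  pose proof (pow_lt t k (proj1 (proj1 Ht))). nra.
Qed.

Lemma disc_contains_interval (rho : erad) :
  erad_pos rho -> exists r, 0 < r /\ forall y, 0 < y <= r -> in_disc rho y.
Proof.
  destruct rho as [r|]; simpl; intros Hr.
  - exists (r / 2). split; [lra|]. intros y Hy. rewrite Rabs_right; lra.
  - exists 1. split; [lra|]. intros; exact I.
Qed.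

Lemma rank_one_P1N (N : nat) (rho : erad) (t : R) (u : nat -> R) :
  0 < t -> (forall y, 0 < y <= t -> in_disc rho y) -> (forall i, 0 < u i <= 1) ->
  P1N N rho (fun i j => t * u i * u j).
Proof.
  intros Ht Hdisc Hu. split; [split|split].
  - intros; ring.
  - intros w. rewrite fsum_rank_one_form.
    pose proof (pow2_ge_0 (fsum N (fun i => w i * u i))). nra.
  - exists (fun i => t * u i), u. reflexivity.
  - intros i j _ _. pose proof (Hu i). pose proof (Hu j).
    assert (Huij : 0 < u i * u j <= 1) by (split; [apply Rmult_lt_0_compat|]; nra).
    assert (Hij : 0 < t * u i * u j <= t)
      by (rewrite Rmult_assoc; split; [apply Rmult_lt_0_compat|]; nra).
    split; [lra|apply Hdisc, Hij].
Qed.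

Lemma PSeries_rank_one_nonneg (rho : erad) (c : nat -> R) (N : nat) (t : R) (u v : nat -> R) :
  (forall y, in_disc rho y -> pser_converges c y) ->
  (forall A, P1N N rho A -> psd N (entrywise (pser_val c) A)) ->
  0 < t -> (forall y, 0 < y <= t -> in_disc rho y) -> (forall i, 0 < u i <= 1) ->
  0 <= PSeries (fun n => c n * fsum N (fun i => v i * u i ^ n) ^ 2) t.
Proof.
  intros Hconv Hpsd Ht Hdisc Hu.
  pose proof (rank_one_P1N N rho t u Ht Hdisc Hu) as HA.
  destruct (Hpsd _ HA) as [_ Hform]. destruct HA as [_ [_ Hentries]].
  assert (Hser : forall i j, (i < N)%nat -> (j < N)%nat ->
                 Pser c (t * u i * u j) (pser_val c (t * u i * u j)))
    by (intros i j Hi Hj; apply pser_val_spec, Hconv, (Hentries i j Hi Hj)).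
  rewrite (is_pseries_unique _ _ _
             (proj2 (is_pseries_Reals _ _ _) (Pser_rank_one_form c _ N t u v Hser))).
  apply Hform.
Qed.

Theorem lemma1p3 (rho : erad) (c : nat -> R) (N : nat) :
  erad_pos rho ->
  (forall x : R, in_disc rho x -> pser_converges c x) ->
  (1 <= N)%nat ->
  (forall A : nat -> nat -> R,
      P1N N rho A -> psd N (entrywise (pser_val c) A)) ->
  forall k : nat, c k <> 0 -> (count_nz c k < N)%nat -> 0 < c k.
Proof.
  (* [1 <= N] is implied by [count_nz c k < N]. *)
  intros Hrho Hconv _ Hpsd k Hck Hcnt.
  destruct (Rtotal_order (c k) 0) as [Hneg|[Hzero|Hpos]]; [|contradiction|assumption].
  exfalso.
  destruct (disc_contains_interval rho Hrho) as [r [Hr Hdisc]].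
  set (x := / 2). assert (Hx : 0 < x < 1) by (unfold x; lra).
  set (rs := nz_roots c x k).
  set (a := fun n => c n * root_prod rs (x ^ n) ^ 2).
  assert (Hlow : forall n, (n < k)%nat -> a n = 0).
  { intros n Hn. unfold a. destruct (Req_EM_T (c n) 0) as [->|Hcn]; [ring|].
    unfold rs. rewrite root_prod_nz_roots_low by assumption. ring. }
  assert (Hak : a k < 0).
  { assert (Hsq : 0 < root_prod rs (x ^ k) ^ 2)
      by exact (pow2_gt_0 _ (root_prod_nz_roots_top c x k Hx)).
    unfold a. nra. }
  assert (Hrad : Rbar_lt 0 (CV_radius a)).
  { destruct (Hconv r (Hdisc r (conj Hr (Rle_refl r)))) as [l Hl].
    apply Rbar_lt_le_trans with r; [exact Hr|].
    apply (CV_radius_weighted c _ r l Hl). intros n. rewrite <- RPow_abs.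
    assert (Hb : Rabs (root_prod rs (x ^ n)) <= 1)
      by exact (root_prod_nz_roots_bound c x k n ltac:(lra)).
    pose proof (Rabs_pos (root_prod rs (x ^ n))). nra. }
  destruct (PSeries_neg_near_0 a k Hrad Hlow Hak r Hr) as [t [Ht Hat]].
  enough (0 <= PSeries a t) by lra.
  rewrite (PSeries_ext a (fun n => c n * fsum N (fun i => root_coefs rs i * (x ^ i) ^ n) ^ 2)).
  - apply (PSeries_rank_one_nonneg rho c N t (pow x) _ Hconv Hpsd); [lra| |].
    + intros y Hy. apply Hdisc. lra.
    + intros i. apply pow_in_unit. lra.
  - intros n. unfold a. rewrite <- (fsum_root_coefs rs N)
      by (unfold rs; rewrite length_nz_roots; exact Hcnt).
    do 2 f_equal. apply fsum_ext; intros i _. rewrite <- !pow_mult, Nat.mul_comm. reflexivity.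
Qed.
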